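(* Consider the algorithm described in the context, suppose it does not terminate after finitely many steps, that the iterates are bounded (there is $R>0$ with $\{x^k\}\subseteq B_R(0)$), and that condition (B.3) holds: for every subsequence $\{k_\ell\}$ such that $\{x^{k_\ell}\}$ converges and $\alpha_{k_\ell}\to0$, $\psi(x^{k_\ell}+\alpha_{k_\ell}\bar s^{k_\ell})-\psi(x^{k_\ell})-\alpha_{k_\ell}\psi'(x^{k_\ell};\bar s^{k_\ell})=o(\alpha_{k_\ell})$ as $\ell\to\infty$. Then there exists a function $h:(0,\infty)\to[0,\infty]$ with $\lim_{\Delta\to0^+}h(\Delta)=0$ such that for every $\Delta>0$ and every $k$ with $\Delta_k\le\Delta$, $$\psi(x^k+\alpha_k\bar s^k)-\psi(x^k)-\alpha_k\psi'(x^k;\bar s^k)\le h(\Delta)\,\alpha_k.$$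
   Context: Problem: minimize $\psi=f+\varphi$ where $f:\mathbb{R}^n\to\mathbb{R}$ is continuously differentiable and $\varphi:\mathbb{R}^n\to\mathbb{R}$ is convex. Notation: $\|\cdot\|$ Euclidean norm, $B_r(x)$ open ball, $\bar v=v/\|v\|$, $\psi'(x;d)$ directional derivative, $\partial\psi(x)=\nabla f(x)+\partial\varphi(x)$; $x$ is stationary if $0\in\partial\psi(x)$. Pseudo-gradient: $g(x)=u(x)d(x)$ where, for non-stationary $x$, $\|d(x)\|=1$, $\psi'(x;d(x))<0$, $u(x)\in[\psi'(x;d(x)),0)$, and for stationary $x$, $d(x)=0$, $u(x)=0$. Safeguards: for $\|d\|=1$, $\Gamma_{\max}(x,d)=\sup\{T>0: t\mapsto\psi(x+td)\text{ is } C^1\text{ on }(0,T)\}$, $\Gamma(x)=\inf_{\|d\|=1}\Gamma_{\max}(x,d)$; a stepsize safeguard $(x,d)\mapsto\Gamma(x,d)\in(0,\infty]$ is fixed. Truncation: $\psi$ can be truncated with data $\mathbb{R}^n=S_0\supset\cdots\supset S_m$, $\delta\in(0,\infty]$, $\kappa>0$, $T:\mathbb{R}^n\times(0,\delta]\to\mathbb{R}^n$ meaning (i) $\Gamma(x)\ge\delta$ on $S_m$; (ii) for $a\in(0,\delta]$, $x\in S_i\setminus S_{i+1}$, $i<m$: if $\Gamma(x)\ge a$ then $T(x,a)=x$, else $T(x,a)\in S_{i+1}$, $\Gamma(T(x,a))\ge a$, $\|T(x,a)-x\|\le\kappa a$. Put $S_{m+1}=\emptyset$. Algorithm: parameters $0<\eta<\eta_1<\eta_2<1$,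 $0<r_1<1<r_2$, $\Delta_{\max}>0$, $\gamma_1,\gamma_2>0$, a positive strictly decreasing summable sequence $(\epsilon_s)$ with $\epsilon_s\le\delta$, a nonincreasing $\ell:(0,\infty)\to[0,\frac12]$ with $\ell(\Delta)\to0$ as $\Delta\to0^+$; start $x^0$, $\Delta_0>0$, counters $c_0=\dots=c_m=0$. Iteration $k$: $g^k=g(x^k)$; stop if $g^k=0$. Choose $B^k\in\mathbb{R}^{n\times n}$, model $m_k(s)=\psi(x^k)+\langle g^k,s\rangle+\frac12\langle s,B^ks\rangle$, Cauchy point $s^k_C=-\alpha^C_kg^k$ with $\alpha^C_k\in\arg\min_{0\le t\le\Delta_k/\|g^k\|}m_k(-tg^k)$. Choose $s^k$, $\|s^k\|\le\Delta_k$, with $m_k(0)-m_k(s^k)\ge\frac{\gamma_1}{2}\|g^k\|\min\{\Delta_k,\gamma_2\|g^k\|\}$ and $m_k(0)-m_k(s^k)\ge(1-\ell(\|s^k\|))(m_k(0)-m_k(s^k_C))$. Let $\rho^1_k=\frac{\psi(x^k)-\psi(x^k+s^k)}{m_k(0)-m_k(s^k)}$. If $\rho^1_k\ge\eta_1$: $\tilde x^k=x^k+s^k$, $\Delta_{k+1}=\min\{\Delta_{\max},r_2\Delta_k\}$ if $\rho^1_k>\eta_2$ and $\Delta_{k+1}=\Delta_k$ otherwise. Stepsize computation (performed for the analysis in every iteration, used by the algorithm when $\rho^1_k<\eta_1$): $\alpha_k=\min\{\Gamma(x^k,\bar s^k),\|s^k\|\}$; if $m_k(0)-m_k(\alpha_k\bar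 s^k)<\frac{\alpha_k}{2\|s^k\|}(m_k(0)-m_k(s^k))$, replace $s^k$ by $s^k_C$ and $\alpha_k=\min\{\Gamma(x^k,\bar s^k_C),\|s^k_C\|\}$; $\rho^2_k=\frac{\psi(x^k)-\psi(x^k+\alpha_k\bar s^k)}{m_k(0)-m_k(\alpha_k\bar s^k)}$. If $\rho^1_k<\eta_1$: $\Delta_{k+1}=r_1\Delta_k$ if $\rho^2_k<\eta_1$, $=\min\{\Delta_{\max},r_2\Delta_k\}$ if $\rho^2_k>\eta_2$, $=\Delta_k$ otherwise; $\tilde x^k=x^k+\alpha_k\bar s^k$ if $\rho^2_k\ge\eta$ and $\tilde x^k=x^k$ otherwise. Truncation step: set $\tilde x=\tilde x^k$ and repeat {find $i$ with $\tilde x\in S_i\setminus S_{i+1}$; if $\Gamma(\tilde x)<\epsilon_{c_i}$ set $\tilde x\leftarrow T(\tilde x,\epsilon_{c_i})$, $c_i\leftarrow c_i+1$; else stop}; $x^{k+1}=\tilde x$. Here $\alpha_k,\bar s^k$ denote the quantities of the stepsize computation. *)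

From HB Require Import structures.
From mathcomp Require Import all_boot all_order all_algebra.
From mathcomp Require Import all_classical all_reals all_analysis.
Set Implicit Arguments. Unset Strict Implicit. Unset Printing Implicit Defensive.
Import Order.TTheory GRing.Theory Num.Theory.
Import numFieldNormedType.Exports.
Local Open Scope classical_set_scope.
Local Open Scope ring_scope.

Section Defs.
Variables (R : realType) (n : nat).
Local Notation vec := 'rV[R]_n.

Definition dot (u v : vec) : R := \sum_(i < n) u 0 i * v 0 i.
Definition enorm (v : vec) : R := Num.sqrt (dot v v).
Definition normalize (v : vec) : vec := (enorm v)^-1 *: v.

Definition has_gradient (f : vec -> R) (gf : vec -> vec) : Prop :=
  forall x (e : R), 0 < e -> exists d : R, 0 < d /\
    forall h : vec, enorm h < d -> `|f (x + h) - f x - dot (gf x) h| <= e * enorm h.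
Definition vcontinuous (g : vec -> vec) : Prop :=
  forall x (e : R), 0 < e -> exists d : R, 0 < d /\
    forall y, enorm (y - x) < d -> enorm (g y - g x) < e.
Definition C1 (f : vec -> R) (gf : vec -> vec) : Prop :=
  has_gradient f gf /\ vcontinuous gf.

Definition convex_fun (phi : vec -> R) : Prop :=
  forall x y (l : R), 0 <= l <= 1 ->
    phi (l *: x + (1 - l) *: y) <= l * phi x + (1 - l) * phi y.

Definition psi_of (f phi : vec -> R) : vec -> R := fun y => f y + phi y.

Definition dirder (psi : vec -> R) (x d : vec) (l : R) : Prop :=
  forall e : R, 0 < e -> exists del : R, 0 < del /\
    forall t : R, 0 < t < del -> `|(psi (x + t *: d) - psi x) / t - l| < e.

Definition subgrad (phi : vec -> R) (x v : vec) : Prop :=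
  forall y, phi x + dot v (y - x) <= phi y.
Definition stationary (gf : vec -> vec) (phi : vec -> R) (x : vec) : Prop :=
  exists v, subgrad phi x v /\ gf x + v = 0.

Definition pseudo_gradient (gf : vec -> vec) (phi : vec -> R)
  (psid : vec -> vec -> R) (d : vec -> vec) (u : vec -> R) : Prop :=
  forall x,
    (stationary gf phi x -> d x = 0 /\ u x = 0) /\
    (~ stationary gf phi x ->
       [/\ enorm (d x) = 1, psid x (d x) < 0, psid x (d x) <= u x & u x < 0]).
Definition pg (d : vec -> vec) (u : vec -> R) (x : vec) : vec := u x *: d x.

Definition C1_on_0T (p : R -> R) (T : R) : Prop :=
  forall t : R, t \in `]0, T[ ->
    derivable p t 1 /\ (derive1 p y @[y --> t] --> derive1 p t).
Definition Gamma_max (psi : vec -> R) (x d : vec) : \bar R :=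
  ereal_sup [set (T%:E)%E | T in [set T : R | 0 < T /\ C1_on_0T (fun t => psi (x + t *: d)) T]].
Definition Gamma (psi : vec -> R) (x : vec) : \bar R :=
  ereal_inf [set Gamma_max psi x d | d in [set d : vec | enorm d = 1]].

(** truncation data; layer i x  <->  x \in S_i \ S_{i+1}  (with S_{m+1} = empty) *)
Definition layer (m : nat) (S : nat -> set vec) (i : nat) (x : vec) : Prop :=
  [/\ (i <= m)%N, S i x & ((i < m)%N -> ~ S i.+1 x)].

Definition truncatable (psi : vec -> R) (m : nat) (S : nat -> set vec)
  (delta : \bar R) (kappa : R) (T : vec -> R -> vec) : Prop :=
  [/\ S 0%N = setT /\ (forall i, (i < m)%N -> S i.+1 `<=` S i),
      (0 < delta)%E, 0 < kappa,
      (forall x, S m x -> (delta <= Gamma psi x)%E) &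
      (forall (a : R) (i : nat) (x : vec), 0 < a -> (a%:E <= delta)%E -> (i < m)%N ->
         S i x -> ~ S i.+1 x ->
         ((a%:E <= Gamma psi x)%E -> T x a = x) /\
         ((Gamma psi x < a%:E)%E ->
            [/\ S i.+1 (T x a), (a%:E <= Gamma psi (T x a))%E &
                enorm (T x a - x) <= kappa * a]))].

Definition incr (c : nat -> nat) (i : nat) : nat -> nat :=
  fun j => if j == i then (c j).+1 else c j.

(** the truncation loop: trunc_run x c x' c'  <->  started at (x,c), the loop stops at (x',c') *)
Inductive trunc_run (psi : vec -> R) (m : nat) (S : nat -> set vec)
    (T : vec -> R -> vec) (eps : nat -> R) :
    vec -> (nat -> nat) -> vec -> (nat -> nat) -> Prop :=
| TStop x c i : layer m S i x -> ~ (Gamma psi x < (eps (c i))%:E)%E ->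
    trunc_run psi m S T eps x c x c
| TStep x c i x' c' : layer m S i x -> (Gamma psi x < (eps (c i))%:E)%E ->
    trunc_run psi m S T eps (T x (eps (c i))) (incr c i) x' c' ->
    trunc_run psi m S T eps x c x' c'.

Definition mdl (psi : vec -> R) (x g : vec) (B : 'M[R]_n) (s : vec) : R :=
  psi x + dot g s + 2^-1 * dot s (s *m B^T).
Definition pred_red psi x g B s : R := mdl psi x g B 0 - mdl psi x g B s.

(* alpha = min{Gamma(x, sbar), ||s||}  (Gs takes values in (0, +oo]) *)
Definition safe_step (Gs : vec -> vec -> \bar R) (x s : vec) : R :=
  fine (Order.min (Gs x (normalize s)) (enorm s)%:E).

Definition final_step (psi : vec -> R) (Gs : vec -> vec -> \bar R)
  (x g : vec) (B : 'M[R]_n) (s sC : vec) : vec :=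
  let a := safe_step Gs x s in
  if pred_red psi x g B (a *: normalize s) < a / (2 * enorm s) * pred_red psi x g B s
  then sC else s.

Definition sfin_k psi Gs (u : vec -> R) (d : vec -> vec) (B : nat -> 'M[R]_n)
  (s : nat -> vec) (aC : nat -> R) (x : nat -> vec) (k : nat) : vec :=
  let g := pg d u (x k) in final_step psi Gs (x k) g (B k) (s k) (- (aC k *: g)).
Definition alpha_k psi Gs u d B s aC x k : R :=
  safe_step Gs (x k) (sfin_k psi Gs u d B s aC x k).
Definition sbar_k psi Gs u d B s aC x k : vec :=
  normalize (sfin_k psi Gs u d B s aC x k).

Definition alg_params (delta : \bar R) (eta eta1 eta2 r1 r2 Dmax gam1 gam2 : R)
  (eps : nat -> R) (ell : R -> R) : Prop :=
  [/\ [/\ 0 < eta, eta < eta1, eta1 < eta2 & eta2 < 1],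
      [/\ 0 < r1, r1 < 1 & 1 < r2], [/\ 0 < Dmax, 0 < gam1 & 0 < gam2],
      [/\ (forall k, 0 < eps k), (forall k, eps k.+1 < eps k),
          cvgn (series eps) & (forall k, ((eps k)%:E <= delta)%E)] &
      [/\ (forall D, 0 < D -> 0 <= ell D <= 2^-1),
          (forall D1 D2, 0 < D1 -> D1 <= D2 -> ell D2 <= ell D1) &
          (forall e : R, 0 < e -> exists d : R, 0 < d /\
             forall D, 0 < D < d -> ell D < e)]].

(** a run of the algorithm: iterates x, radii Delta, counters c,
    matrices B, trial steps s, Cauchy stepsizes aC *)
Definition alg_run (psi : vec -> R) (u : vec -> R) (d : vec -> vec)
  (Gs : vec -> vec -> \bar R) (m : nat) (S : nat -> set vec) (T : vec -> R -> vec)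
  (eta eta1 eta2 r1 r2 Dmax gam1 gam2 : R) (eps : nat -> R) (ell : R -> R)
  (x : nat -> vec) (Delta : nat -> R) (c : nat -> nat -> nat)
  (B : nat -> 'M[R]_n) (s : nat -> vec) (aC : nat -> R) : Prop :=
  [/\ 0 < Delta 0%N, c 0%N = (fun _ => 0%N) &
  forall k,
    let g := pg d u (x k) in
    let mk := mdl psi (x k) g (B k) in
    let sC := - (aC k *: g) in
    let tmax := Delta k / enorm g in
    let r1k := (psi (x k) - psi (x k + s k)) / (mk 0 - mk (s k)) in
    let a := alpha_k psi Gs u d B s aC x k in
    let sb := sbar_k psi Gs u d B s aC x k in
    let r2k := (psi (x k) - psi (x k + a *: sb)) / (mk 0 - mk (a *: sb)) in
    [/\ 0 <= aC k <= tmax /\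
          (forall t, 0 <= t <= tmax -> mk (- (aC k *: g)) <= mk (- (t *: g))),
        enorm (s k) <= Delta k,
        gam1 / 2 * enorm g * Num.min (Delta k) (gam2 * enorm g) <= mk 0 - mk (s k),
        (1 - ell (enorm (s k))) * (mk 0 - mk sC) <= mk 0 - mk (s k) &
        exists xt : vec,
          (if eta1 <= r1k then
             xt = x k + s k /\
             Delta k.+1 = (if eta2 < r1k then Num.min Dmax (r2 * Delta k) else Delta k)
           else
             Delta k.+1 = (if r2k < eta1 then r1 * Delta k
                           else if eta2 < r2k then Num.min Dmax (r2 * Delta k)
                           else Delta k) /\
             xt = (if eta <= r2k then x k + a *: sb else x k)) /\
          trunc_run psi m S T eps xt (c k) (x k.+1) (c k.+1)]].

Definition Qerr (psi : vec -> R) (psid : vec -> vec -> R) (x : vec) (a : R) (sb : vec) : R :=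
  psi (x + a *: sb) - psi x - a * psid x sb.

End Defs.

From HB Require Import structures.
From mathcomp Require Import all_boot all_order all_algebra.
From mathcomp Require Import all_classical all_reals all_analysis.
From mathcomp Require Import ring lra zify.
Set Implicit Arguments. Unset Strict Implicit. Unset Printing Implicit Defensive.
Import Order.TTheory GRing.Theory Num.Theory.
Import numFieldNormedType.Exports.
Local Open Scope classical_set_scope.
Local Open Scope ring_scope.

(* Along any run, alpha_k lies in (0, Delta_k].  If for some e > 0 there were
   iterations with arbitrarily small radius Delta_k and
   Q_k := psi(x^k + alpha_k sbar^k) - psi(x^k) - alpha_k psi'(x^k; sbar^k) > e alpha_k,
   then, by boundedness and Bolzano-Weierstrass, a subsequence of them would have
   convergent x^k and alpha_k -> 0, contradicting (B.3).  Hence Q_k <= e alpha_k as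
   soon as Delta_k is small enough, and h(D) := sup({0} U {Q_k/alpha_k | Delta_k <= D})
   is the required modulus.  Only (B.3), boundedness and the mechanics of the
   stepsize computation are used. *)

Section Euclidean.
Variables (R : realType) (n : nat).
Implicit Types (u v : 'rV[R]_n) (a : R).

Lemma dotZl a u v : dot (a *: u) v = a * dot u v.
Proof. by rewrite /dot mulr_sumr; apply: eq_bigr => i _; rewrite mxE mulrA. Qed.

Lemma dotZr a u v : dot u (a *: v) = a * dot u v.
Proof. by rewrite /dot mulr_sumr; apply: eq_bigr => i _; rewrite mxE mulrCA. Qed.

Lemma dot_ge0 v : 0 <= dot v v.
Proof. by apply: sumr_ge0 => i _; rewrite -expr2 sqr_ge0. Qed.

Lemma dot_eq0 v : dot v v = 0 -> v = 0.
Proof.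
move=> /psumr_eq0P vv0; apply/rowP => i; rewrite mxE.
apply/eqP; rewrite -sqrf_eq0 expr2 vv0 // => j _.
by rewrite -expr2 sqr_ge0.
Qed.

Lemma enorm_ge0 v : 0 <= enorm v.
Proof. exact: sqrtr_ge0. Qed.

Lemma enorm_gt0 v : v != 0 -> 0 < enorm v.
Proof.
move=> v0; rewrite /enorm sqrtr_gt0 lt_neqAle dot_ge0 andbT eq_sym.
by apply: contra v0 => /eqP /dot_eq0 ->.
Qed.

Lemma enormZ a v : enorm (a *: v) = `|a| * enorm v.
Proof. by rewrite /enorm dotZl dotZr mulrA sqrtrM ?sqr_ge0 // -expr2 sqrtr_sqr. Qed.

Lemma enormN v : enorm (- v) = enorm v.
Proof. by rewrite -scaleN1r enormZ normrN normr1 mul1r. Qed.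

Lemma enorm_normalize v : v != 0 -> enorm (normalize v) = 1.
Proof.
move=> v0; rewrite /normalize enormZ ger0_norm ?invr_ge0 ?enorm_ge0 //.
by rewrite mulVf // gt_eqF // enorm_gt0.
Qed.

Lemma coord_le_enorm v i : `|v 0 i| <= enorm v.
Proof.
rewrite /enorm -sqrtr_sqr ler_sqrt ?dot_ge0 //.
rewrite /dot (bigD1 i) //= -expr2 lerDl; apply: sumr_ge0 => j _.
by rewrite -expr2 sqr_ge0.
Qed.

Lemma enorm_lt_of_coords v (e : R) : 0 < e ->
  (forall i, `|v 0 i| < e / n.+1%:R) -> enorm v < e.
Proof.
move=> e0 small; rewrite /enorm -(gtr0_norm e0) -sqrtr_sqr ltr_sqrt ?exprn_gt0 //.
have n1_gt0 : 0 < n.+1%:R :> R by rewrite ltr0n.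
apply: (@le_lt_trans _ _ (\sum_(i < n) (e / n.+1%:R) ^+ 2)).
  apply: ler_sum => i _; rewrite -expr2 -real_normK ?num_real //.
  by rewrite lerXn2r ?nnegrE ?normr_ge0 ?ltW // divr_gt0.
rewrite -(big_mkord xpredT (fun _ => (e / n.+1%:R) ^+ 2)) sumr_const_nat subn0.
have -> : (e / n.+1%:R) ^+ 2 *+ n = e ^+ 2 * (n%:R / n.+1%:R ^+ 2).
  by rewrite -mulr_natr; field; rewrite gt_eqF.
rewrite gtr_pMr ?exprn_gt0 // ltr_pdivrMr ?exprn_gt0 // mul1r -natrX ltr_nat.
by rewrite expnS; nia.
Qed.

Definition cvg_enorm (y : nat -> 'rV[R]_n) (xb : 'rV[R]_n) : Prop :=
  forall e : R, 0 < e -> exists L, forall l, (L <= l)%N -> enorm (y l - xb) < e.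

End Euclidean.

Lemma increasing_ge_id (f : nat -> nat) : (forall l, (f l < f l.+1)%N) ->
  forall l, (l <= f l)%N.
Proof. by move=> f_incr; elim=> // l IH; apply: leq_ltn_trans IH (f_incr l). Qed.

Lemma increasing_comp (f g : nat -> nat) : (forall l, (f l < f l.+1)%N) ->
  (forall l, (g l < g l.+1)%N) -> forall l, (f (g l) < f (g l.+1))%N.
Proof. by move=> f_incr g_incr l; apply: (homo_ltn ltn_trans f_incr). Qed.

Lemma bounded_coords_cvg_subseq (R : realType) (n : nat) (y : nat -> 'rV[R]_n)
    (M : R) : (forall k, enorm (y k) < M) -> forall p, (p <= n)%N ->
  exists2 f : nat -> nat, (forall l, (f l < f l.+1)%N) &
    exists cc : 'I_n -> R, forall e : R, 0 < e -> exists L, forall l, (L <= l)%N ->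
      forall i : 'I_n, (i < p)%N -> `|y (f l) 0 i - cc i| < e.
Proof.
move=> yM; elim=> [|p IH] pn.
  by exists id => //; exists (fun=> 0) => e _; exists 0%N => l _ i; rewrite ltn0.
have [f f_incr [cc cc_lim]] := IH (ltnW pn).
pose ip : 'I_n := Ordinal pn.
have bounded_ip : bounded_fun (fun l => y (f l) 0 ip).
  exists M; split; first exact: num_real.
  move=> N MN l _ /=; have := coord_le_enorm (y (f l)) ip; have := yM (f l); lra.
have [g /increasing_seqP g_incr /cvg_ex [lim /cvgrPdist_lt g_lim]] :=
  bolzano_weierstrass bounded_ip.
exists (f \o g); first exact: increasing_comp f_incr g_incr.
exists (fun i : 'I_n => if val i == p then lim else cc i) => e e0.
have [L1 HL1] := cc_lim e e0; have [L2 _ HL2] := g_lim e e0.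
exists (maxn L1 L2) => l; rewrite geq_max => /andP [l1 l2] i.
rewrite ltnS leq_eqVlt; case: eqP => [ip_eq _ | _ /= ilt].
  have -> : i = ip by exact: val_inj.
  by rewrite distrC; exact: HL2.
by apply: HL1 => //; apply: leq_trans l1 (increasing_ge_id g_incr l).
Qed.

Lemma bounded_cvg_subseq (R : realType) (n : nat) (y : nat -> 'rV[R]_n) (M : R) :
  (forall k, enorm (y k) < M) ->
  exists2 f : nat -> nat, (forall l, (f l < f l.+1)%N) &
    exists xb, cvg_enorm (fun l => y (f l)) xb.
Proof.
move=> yM; have [f f_incr [cc cc_lim]] := bounded_coords_cvg_subseq yM (leqnn n).
exists f => //; exists (\row_i cc i) => e e0.
have [L HL] := cc_lim (e / n.+1%:R) (divr_gt0 e0 (ltr0Sn _ _)).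
by exists L => l lL; apply: enorm_lt_of_coords => // i; rewrite !mxE; exact: HL.
Qed.

Section SubsequenceExtraction.
Variables (R : realType) (D : nat -> R).
Hypothesis D_gt0 : forall k, 0 < D k.

Lemma prefix_lower_bound N : exists2 dl : R, 0 < dl & forall k, (k < N)%N -> dl <= D k.
Proof.
elim: N => [|N [dl dl0 dl_le]]; first by exists 1.
exists (Num.min dl (D N)); first by rewrite lt_min dl0 D_gt0.
move=> k; rewrite ltnS leq_eqVlt => /orP [/eqP -> | kN].
  by rewrite ge_min lexx orbT.
by rewrite ge_min dl_le.
Qed.

Lemma extract_subseq_to0 (P : nat -> Prop) :
  (forall dl, 0 < dl -> exists2 k, D k < dl & P k) ->
  exists2 kl : nat -> nat, (forall l, (kl l < kl l.+1)%N) &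
    forall l, D (kl l) < l.+1%:R^-1 /\ P (kl l).
Proof.
move=> often.
have late (Nj : nat * nat) : exists k, (Nj.1 <= k)%N /\ D k < Nj.2.+1%:R^-1 /\ P k.
  have [dl dl0 dl_le] := prefix_lower_bound Nj.1.
  have [|k Dk Pk] := often (Num.min dl Nj.2.+1%:R^-1).
    by rewrite lt_min dl0 invr_gt0 ltr0Sn.
  exists k; split; last by split => //; apply: lt_le_trans Dk _; rewrite ge_min lexx orbT.
  rewrite leqNgt; apply/negP => /dl_le.
  by rewrite leNgt (lt_le_trans Dk) // ge_min lexx.
have [next next_spec] := choice late.
pose kl := fix kl j := if j is j'.+1 then next ((kl j').+1, j) else next (0, 0)%N.
exists kl; first by move=> j; exact: (next_spec ((kl j).+1, j.+1)).1.
by case=> [|j]; [exact: (next_spec (0, 0)%N).2 | exact: (next_spec ((kl j).+1, j.+1)).2].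
Qed.

End SubsequenceExtraction.

Lemma invSn_lt_eventually (R : realType) (e : R) : 0 < e ->
  exists L, forall l, (L <= l)%N -> l.+1%:R^-1 < e.
Proof.
move=> e0; exists (Num.truncn e^-1) => l lL.
apply: le_lt_trans (_ : (Num.truncn e^-1).+1%:R^-1 < e).
  by rewrite lef_pV2 ?posrE ?ltr0Sn // ler_nat ltnS.
by rewrite invf_plt ?posrE ?ltr0Sn // truncnS_gt.
Qed.

Section ErrorOnSmallRadius.
Variables (R : realType) (n : nat) (x : nat -> 'rV[R]_n) (a D Q : nat -> R) (M : R).
Hypothesis x_bounded : forall k, enorm (x k) < M.
Hypothesis a_gt0_le : forall k, 0 < a k /\ a k <= D k.
Hypothesis small_error_on_cvg_subseq : forall kl : nat -> nat,
  (forall l, (kl l < kl l.+1)%N) ->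
  (exists xb, cvg_enorm (fun l => x (kl l)) xb) ->
  (forall e : R, 0 < e -> exists L, forall l, (L <= l)%N -> `|a (kl l)| < e) ->
  forall e : R, 0 < e -> exists L, forall l, (L <= l)%N ->
    `|Q (kl l)| <= e * `|a (kl l)|.

Lemma error_le_on_small_radius (e : R) : 0 < e ->
  exists dl : R, 0 < dl /\ forall k, D k < dl -> Q k <= e * a k.
Proof.
move=> e0; apply: contrapT => no_dl.
have often dl : 0 < dl -> exists2 k, D k < dl & e * a k < Q k.
  move=> dl0; apply: contrapT => none; apply: no_dl; exists dl; split => // k Dk.
  by rewrite leNgt; apply/negP => Qk; apply: none; exists k.
have D_gt0 k : 0 < D k by have [a0 aD] := a_gt0_le k; apply: lt_le_trans aD.
have [ks ks_incr ks_spec] := extract_subseq_to0 D_gt0 often.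
have [fb fb_incr x_cvg] := bounded_cvg_subseq (fun j => x_bounded (ks j)).
have a_to0 e' : 0 < e' -> exists L, forall l, (L <= l)%N -> `|a (ks (fb l))| < e'.
  move=> e'0; have [L HL] := invSn_lt_eventually e'0; exists L => l lL.
  have [a0 aD] := a_gt0_le (ks (fb l)); have [Dks _] := ks_spec (fb l).
  rewrite gtr0_norm //; apply: le_lt_trans aD (lt_trans Dks (le_lt_trans _ (HL l lL))).
  by rewrite lef_pV2 ?posrE ?ltr0Sn // ler_nat ltnS increasing_ge_id.
have [L HL] := small_error_on_cvg_subseq (increasing_comp ks_incr fb_incr)
  x_cvg a_to0 e0.
have [a0 _] := a_gt0_le (ks (fb L)); have [_ Qbig] := ks_spec (fb L).
have := HL L (leqnn L); have := ler_norm (Q (ks (fb L))).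
rewrite (gtr0_norm a0); lra.
Qed.

End ErrorOnSmallRadius.

Lemma exists_error_modulus (R : realType) (a D Q : nat -> R) :
  (forall k, 0 < a k) ->
  (forall e : R, 0 < e -> exists dl : R, 0 < dl /\ forall k, D k < dl -> Q k <= e * a k) ->
  exists h : R -> \bar R,
    [/\ (forall r, 0 < r -> (0 <= h r)%E),
        (forall e : R, 0 < e -> exists dl : R, 0 < dl /\
           forall r, 0 < r < dl -> (h r <= e%:E)%E) &
        (forall r k, 0 < r -> D k <= r -> ((Q k)%:E <= h r * (a k)%:E)%E)].
Proof.
move=> a_gt0 small.
pose h r := ereal_sup [set y : \bar R | y = 0%E \/
  exists k, D k <= r /\ y = (Q k / a k)%:E].
exists h; split.
- by move=> r _; apply: le_ereal_sup_tmp; exists 0%E => //; left.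
- move=> e e0; have [dl [dl0 Qle]] := small e e0; exists dl; split => // r /andP [_ rdl].
  apply: ge_ereal_sup => y [-> | [k [Dk ->]]]; first by rewrite lee_fin ltW.
  by rewrite lee_fin ler_pdivrMr ?a_gt0 //; apply: Qle; apply: le_lt_trans Dk rdl.
- move=> r k _ Dk; have a0 := a_gt0 k.
  have Qa_le : ((Q k / a k)%:E <= h r)%E.
    by apply: le_ereal_sup_tmp; exists (Q k / a k)%:E => //; right; exists k.
  rewrite -[Q k](divfK (lt0r_neq0 a0)) EFinM.
  by apply: lee_wpmul2r => //; rewrite lee_fin ltW.
Qed.

Lemma mdl_line (R : realType) (n : nat) (psi : 'rV[R]_n -> R) x g B (t : R) :
  mdl psi x g B (- (t *: g)) = psi x - t * dot g g + 2^-1 * (t * t) * dot g (g *m B^T).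
Proof. by rewrite /mdl -scaleNr -scalemxAl dotZl !dotZr; ring. Qed.

(* The model decreases along -g near t = 0 with slope -||g||^2 < 0. *)
Lemma cauchy_stepsize_gt0 (R : realType) (n : nat) (psi : 'rV[R]_n -> R) x g B
    (a tmax : R) :
  g != 0 -> 0 < tmax -> 0 <= a <= tmax ->
  (forall t, 0 <= t <= tmax -> mdl psi x g B (- (a *: g)) <= mdl psi x g B (- (t *: g))) ->
  0 < a.
Proof.
move=> g0 tmax0 /andP [a0 atmax] a_min.
rewrite lt_neqAle a0 andbT; apply/eqP => a_eq0; rewrite -a_eq0 in a_min.
set G := dot g g; set Q := dot g (g *m B^T).
have G0 : 0 < G by have := enorm_gt0 g0; rewrite /enorm sqrtr_gt0.
have Q1 : 0 < `|Q| + 1 by rewrite ltr_wpDl.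
pose t := Num.min tmax (G / (`|Q| + 1)).
have t0 : 0 < t by rewrite lt_min tmax0 divr_gt0.
have t_tmax : t <= tmax by rewrite ge_min lexx.
have tG : t * (`|Q| + 1) <= G by rewrite -ler_pdivlMr // ge_min lexx orbT.
have := a_min t; rewrite ltW //= t_tmax !mdl_line -/G -/Q => /(_ isT) decr.
have tQ : t * t * Q <= t * t * `|Q| := ler_wpM2l (mulr_ge0 (ltW t0) (ltW t0)) (ler_norm Q).
have ttG : t * (t * (`|Q| + 1)) <= t * G := ler_wpM2l (ltW t0) tG.
have tt0 : 0 < t * t by rewrite mulr_gt0.
have tG0 : 0 < t * G by rewrite mulr_gt0.
clearbody G Q t; nra.
Qed.

Section AlgorithmRun.
Variables (R : realType) (n : nat) (psi u : 'rV[R]_n -> R) (d : 'rV[R]_n -> 'rV[R]_n)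
  (Gs : 'rV[R]_n -> 'rV[R]_n -> \bar R) (m : nat) (S : nat -> set 'rV[R]_n)
  (delta : \bar R) (T : 'rV[R]_n -> R -> 'rV[R]_n)
  (eta eta1 eta2 r1 r2 Dmax gam1 gam2 : R) (eps : nat -> R) (ell : R -> R)
  (x : nat -> 'rV[R]_n) (Delta : nat -> R) (c : nat -> nat -> nat)
  (B : nat -> 'M[R]_n) (s : nat -> 'rV[R]_n) (aC : nat -> R).
Hypothesis params : alg_params delta eta eta1 eta2 r1 r2 Dmax gam1 gam2 eps ell.
Hypothesis run : alg_run psi u d Gs m S T eta eta1 eta2 r1 r2 Dmax gam1 gam2 eps ell
  x Delta c B s aC.
Hypothesis nonstationary : forall k, pg d u (x k) <> 0.
Hypothesis Gs_gt0 : forall y v, enorm v = 1 -> (0 < Gs y v)%E.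

Lemma Delta_gt0 k : 0 < Delta k.
Proof.
have [_ [r1_gt0 _ r2_gt1] [Dmax_gt0 _ _] _ _] := params.
have [Delta0_gt0 _ step] := run.
elim: k => // k IH; have [_ _ _ _ [xt [update _]]] := step k.
have min_gt0 : 0 < Num.min Dmax (r2 * Delta k).
  by rewrite lt_min Dmax_gt0 mulr_gt0 // (lt_trans ltr01).
move: update; case: ifP => _ [].
  by move=> _ ->; case: ifP.
by move=> -> _; case: ifP => _; [rewrite mulr_gt0 | case: ifP].
Qed.

Lemma final_step_neq0_le k :
  sfin_k psi Gs u d B s aC x k != 0 /\ enorm (sfin_k psi Gs u d B s aC x k) <= Delta k.
Proof.
have [_ _ [_ gam1_gt0 gam2_gt0] _ _] := params.
have [_ _ step] := run; have := step k; rewrite /=.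
set g := pg d u (x k).
move=> [[/andP [aC_ge0 aC_le] aC_min] s_le decrease _ _].
have g0 : g != 0 by apply/eqP; exact: nonstationary.
have g_gt0 : 0 < enorm g := enorm_gt0 g0.
have tmax_gt0 : 0 < Delta k / enorm g by rewrite divr_gt0 ?Delta_gt0.
have aC_gt0 : 0 < aC k.
  by apply: (cauchy_stepsize_gt0 g0 tmax_gt0 _ aC_min); rewrite aC_ge0 aC_le.
rewrite /sfin_k /final_step -/g; case: ifP => _.
  rewrite oppr_eq0 scaler_eq0 negb_or g0 andbT lt0r_neq0 //.
  by rewrite enormN enormZ gtr0_norm // -ler_pdivlMr.
split => //; apply/eqP => s0; move: decrease; rewrite s0 subrr; apply/negP.
by rewrite -ltNge !mulr_gt0 // lt_min Delta_gt0 mulr_gt0.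
Qed.

Lemma alpha_k_gt0_le k :
  0 < alpha_k psi Gs u d B s aC x k /\ alpha_k psi Gs u d B s aC x k <= Delta k.
Proof.
have [s0 s_le] := final_step_neq0_le k.
have s_gt0 := enorm_gt0 s0.
have := Gs_gt0 (x k) (enorm_normalize s0).
rewrite /alpha_k /safe_step.
case: (Gs (x k) (normalize _)) => [r| |] //= r_gt0.
by rewrite -EFin_min /= lt_min s_gt0 -lte_fin r_gt0 ge_min s_le orbT.
Qed.

End AlgorithmRun.

Theorem lemma4p6 (R : realType) (n : nat)
  (f : 'rV[R]_n -> R) (gradf : 'rV[R]_n -> 'rV[R]_n) (phi : 'rV[R]_n -> R)
  (psid : 'rV[R]_n -> 'rV[R]_n -> R)
  (d : 'rV[R]_n -> 'rV[R]_n) (u : 'rV[R]_n -> R)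
  (Gs : 'rV[R]_n -> 'rV[R]_n -> \bar R)
  (m : nat) (S : nat -> set 'rV[R]_n) (delta : \bar R) (kappa : R)
  (T : 'rV[R]_n -> R -> 'rV[R]_n)
  (eta eta1 eta2 r1 r2 Dmax gam1 gam2 : R) (eps : nat -> R) (ell : R -> R)
  (x : nat -> 'rV[R]_n) (Delta : nat -> R) (c : nat -> nat -> nat)
  (B : nat -> 'M[R]_n) (s : nat -> 'rV[R]_n) (aC : nat -> R) :
  (* problem data *)
  C1 f gradf -> convex_fun phi ->
  (forall y v, dirder (psi_of f phi) y v (psid y v)) ->
  pseudo_gradient gradf phi psid d u ->
  (forall y v, enorm v = 1 -> (0 < Gs y v)%E) ->
  truncatable (psi_of f phi) m S delta kappa T ->
  (* the algorithm *)
  alg_params delta eta eta1 eta2 r1 r2 Dmax gam1 gam2 eps ell ->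
  alg_run (psi_of f phi) u d Gs m S T eta eta1 eta2 r1 r2 Dmax gam1 gam2 eps ell
    x Delta c B s aC ->
  (* it does not terminate *)
  (forall k, pg d u (x k) <> 0) ->
  (* bounded iterates *)
  (exists Rb : R, 0 < Rb /\ forall k, enorm (x k) < Rb) ->
  (* condition (B.3) *)
  (forall kl : nat -> nat, (forall l, (kl l < kl l.+1)%N) ->
     (exists xb : 'rV[R]_n, forall e : R, 0 < e ->
        exists L, forall l, (L <= l)%N -> enorm (x (kl l) - xb) < e) ->
     (forall e : R, 0 < e -> exists L, forall l, (L <= l)%N ->
        `|alpha_k (psi_of f phi) Gs u d B s aC x (kl l)| < e) ->
     forall e : R, 0 < e -> exists L, forall l, (L <= l)%N ->
       `|Qerr (psi_of f phi) psid (x (kl l))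
               (alpha_k (psi_of f phi) Gs u d B s aC x (kl l))
               (sbar_k (psi_of f phi) Gs u d B s aC x (kl l))|
       <= e * `|alpha_k (psi_of f phi) Gs u d B s aC x (kl l)|) ->
  exists h : R -> \bar R,
    [/\ (forall D, 0 < D -> (0 <= h D)%E),
        (forall e : R, 0 < e -> exists dl : R, 0 < dl /\
           forall D, 0 < D < dl -> (h D <= e%:E)%E) &
        (forall D k, 0 < D -> Delta k <= D ->
           ((Qerr (psi_of f phi) psid (x k)
                  (alpha_k (psi_of f phi) Gs u d B s aC x k)
                  (sbar_k (psi_of f phi) Gs u d B s aC x k))%:E
            <= h D * (alpha_k (psi_of f phi) Gs u d B s aC x k)%:E)%E)].
Proof.
move=> _ _ _ _ Gs_gt0 _ params run nonstationary [Rb [_ x_bounded]] B3.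
have alpha_spec := alpha_k_gt0_le params run nonstationary Gs_gt0.
apply: exists_error_modulus (fun k => (alpha_spec k).1) _.
exact: error_le_on_small_radius x_bounded alpha_spec B3.
Qed.
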